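(* Let $p$ be a prime, $q=p^n$, $d$ a natural number with $(d,p)=1$, $\psi$ a nontrivial additive character of $\mathbb{F}_p$, and $r$ a natural number with $r<d$. Let $\alpha\in\mathbb{F}_{q^r}$. Then the average of $\psi\left(\mathrm{Tr}_{\mathbb{F}_{q^r}/\mathbb{F}_p}f(\alpha)\right)$ over $f\in\mathcal{F}_d$ (uniform) equals $1$ if $\alpha=0$, or if $p\mid r$ and $\alpha\in\mathbb{F}_{q^{r/p}}$; and equals $0$ otherwise.
   Context: $\mathcal{F}_d$ denotes the set of polynomials $f=\sum_{i=0}^d a_ix^i\in\mathbb{F}_q[x]$ with $a_d\neq 0$ and $a_i=0$ for every $i\ge 0$ divisible by $p$. *)

From mathcomp Require Import all_boot all_order all_algebra all_field.
Set Implicit Arguments. Unset Strict Implicit. Unset Printing Implicit Defensive.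
Import GRing.Theory Num.Theory.
Local Open Scope ring_scope.

(* Inside a finite field L of characteristic p, the subfield F_m
   (m a power of p, with F_m contained in L) is the set of x with x^m = x. *)
Definition Fsub (L : finFieldType) (m : nat) : pred L := [pred x | x ^+ m == x].
Arguments Fsub : clear implicits.

Definition trace (L : finFieldType) (p k : nat) (x : L) : L :=
  \sum_(j < k) x ^+ (p ^ j).

Definition poly_of (L : finFieldType) (d : nat) (a : {ffun 'I_d.+1 -> L}) : {poly L} :=
  \poly_(i < d.+1) a (inord i).

(* F_d : polynomials sum_{i<=d} a_i x^i over F_q (q = the subfield size),
   with a_d <> 0 and a_i = 0 whenever p | i (in particular a_0 = 0),
   encoded by their coefficient vectors. *)
Definition Fd (L : finFieldType) (p q d : nat) : {set {ffun 'I_d.+1 -> L}} :=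
  [set a : {ffun 'I_d.+1 -> L} | [&& [forall i, a i \in Fsub L q],
              [forall i : 'I_d.+1, (p %| i)%N ==> (a i == 0)] &
              a ord_max != 0]].

(* Write Tr = Tr_{F_q/F_p} o Tr_{F_q^r/F_q}.  For f in F_d, whose coefficients a_i
   lie in F_q, this gives Tr f(alpha) = Tr_{F_q/F_p} (sum_i a_i Tr_{F_q^r/F_q} alpha^i).
   If alpha = 0, or p | r and alpha lies in F_{q^(r/p)}, then Tr_{F_q^r/F_q} alpha^i
   is p times a trace from a smaller field for every i > 0; as a_0 = 0, every term of
   the sum is psi 0 = 1.  Otherwise some i <= r < d with p not dividing i has
   Tr_{F_q^r/F_q} alpha^i <> 0, and shifting the coefficient a_i by a suitable element
   of F_q permutes F_d while adding to every trace a fixed x with psi x <> 1, so the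
   character sum vanishes. *)

From mathcomp Require Import all_boot all_order all_algebra all_field.
From mathcomp Require Import zify.
Set Implicit Arguments. Unset Strict Implicit. Unset Printing Implicit Defensive.
Import GRing.Theory Num.Theory.
Local Open Scope ring_scope.

Lemma sum_nat_blocks (V : nmodType) (G : nat -> V) a b :
  \sum_(0 <= j < a * b) G j = \sum_(0 <= t < b) \sum_(0 <= w < a) G (w + a * t)%N.
Proof.
rewrite mulnC big_nat_mul; apply: eq_bigr => t _.
rewrite -{1}(add0n (t * a)%N) big_addn mulSn addnK.
by apply: eq_bigr => w _; rewrite mulnC.
Qed.

Section Trace.

Variable L : finFieldType.

Lemma FsubP m (x : L) : reflect (x ^+ m = x) (x \in Fsub L m).
Proof. by rewrite inE; apply: eqP. Qed.

Lemma expr_expn_fixed m k (x : L) : x ^+ m = x -> x ^+ (m ^ k) = x.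
Proof. by move=> xm; elim: k => [|k IHk]; rewrite ?expr1 // expnSr exprM IHk. Qed.

Lemma expr_expn_periodic m k w t (x : L) :
  x ^+ (m ^ k) = x -> x ^+ (m ^ (w + k * t)%N) = x ^+ (m ^ w).
Proof. by move=> xmk; rewrite expnD exprM exprAC expnM (expr_expn_fixed t xmk). Qed.

Lemma expr_sum_pchar_nat e I (s : seq I) (P : pred I) (F : I -> L) :
  [pchar L].-nat e ->
  (\sum_(i <- s | P i) F i) ^+ e = \sum_(i <- s | P i) F i ^+ e.
Proof.
move=> he; have e_gt0 : (0 < e)%N by case/andP: he.
apply: (big_morph (fun x => x ^+ e)); last by rewrite expr0n gtn_eqF.
by move=> x y; apply: exprDn_pchar.
Qed.

Lemma trace_expr_pchar_nat e m k (x : L) :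
  [pchar L].-nat e -> trace m k (x ^+ e) = trace m k x ^+ e.
Proof.
by move=> he; rewrite /trace expr_sum_pchar_nat //; apply: eq_bigr => j _; rewrite exprAC.
Qed.

Lemma traceZ m k (c x : L) : c ^+ m = c -> trace m k (c * x) = c * trace m k x.
Proof.
move=> cm; rewrite /trace mulr_sumr; apply: eq_bigr => j _.
by rewrite exprMn (expr_expn_fixed j cm).
Qed.

Lemma trace_periodic m k t (x : L) :
  x ^+ (m ^ k) = x -> trace m (k * t)%N x = trace m k x *+ t.
Proof.
move=> xmk; rewrite /trace -!(big_mkord xpredT (fun j => x ^+ (m ^ j))).
rewrite sum_nat_blocks -{2}(subn0 t) -sumr_const_nat; apply: eq_bigr => i _.
by apply: eq_bigr => w _; apply: expr_expn_periodic.
Qed.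

Section PcharNat.

Variable m : nat.
Hypothesis pcharLm : [pchar L].-nat m.

Lemma pchar_nat_expn k : [pchar L].-nat (m ^ k)%N.
Proof. by rewrite pnatX pcharLm. Qed.

Lemma traceD k (x y : L) : trace m k (x + y) = trace m k x + trace m k y.
Proof.
rewrite /trace -big_split /=; apply: eq_bigr => j _.
by rewrite exprDn_pchar // pchar_nat_expn.
Qed.

Lemma trace0 k : trace m k (0 : L) = 0.
Proof.
rewrite /trace big1 // => j _; rewrite expr0n gtn_eqF //.
by case/andP: (pchar_nat_expn j).
Qed.

Lemma trace_sum k I (s : seq I) (P : pred I) (F : I -> L) :
  trace m k (\sum_(i <- s | P i) F i) = \sum_(i <- s | P i) trace m k (F i).
Proof. exact: (big_morph _ (traceD k) (trace0 k)). Qed.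

Lemma trace_fixed k (x : L) : x ^+ (m ^ k) = x -> trace m k x ^+ m = trace m k x.
Proof.
move=> xmk; rewrite /trace expr_sum_pchar_nat //.
under eq_bigr => j _ do rewrite -exprM -expnSr.
case: k xmk => [|k] xmk; first by rewrite !big_ord0.
by rewrite big_ord_recr big_ord_recl /= xmk addrC.
Qed.

Lemma trace_tower n r (x : L) : trace m (n * r)%N x = trace m n (trace (m ^ n) r x).
Proof.
rewrite [RHS]/trace.
under eq_bigr => u _ do rewrite expr_sum_pchar_nat ?pchar_nat_expn //.
rewrite exchange_big /= /trace -(big_mkord xpredT (fun j => x ^+ (m ^ j))).
rewrite sum_nat_blocks big_mkord; apply: eq_bigr => v _; rewrite big_mkord.
by apply: eq_bigr => u _; rewrite -exprM expnD expnM mulnC.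
Qed.

End PcharNat.

Lemma trace_neq0 m N : (1 < m)%N -> #|L| = (m ^ N)%N -> (0 < N)%N ->
  exists y : L, trace m N y != 0.
Proof.
move=> m_gt1 cardL; case: N cardL => // N cardL _.
pose T : {poly L} := \sum_(j < N.+1) 'X^(m ^ j).
have hornerT y : T.[y] = trace m N.+1 y.
  by rewrite horner_sum; apply: eq_bigr => j _; rewrite hornerXn.
have T_neq0 : T != 0.
  apply/eqP => /(congr1 (fun P : {poly L} => P`_1)); apply/eqP.
  rewrite coef0 coef_sum big_ord_recl big1 => [|j _].
    by rewrite coefXn expn0 addr0 oner_eq0.
  by rewrite coefXn eq_sym (gtn_eqF (_ : 1 < _)%N) // -[X in (X < _)%N](expn0 m) ltn_exp2l.
have sizeT : (size T <= (m ^ N).+1)%N.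
  apply: (leq_trans (size_sum _ _ _)); apply/bigmax_leqP => j _.
  by rewrite size_polyXn ltnS leq_exp2l // -ltnS.
have [y Ty_neq0 | all_roots] := pickP (fun y => T.[y] != 0).
  by exists y; rewrite -hornerT.
have all_roots_T : all (root T) (enum L).
  by apply/allP => y _; apply/negbFE/all_roots.
have := max_poly_roots T_neq0 all_roots_T (enum_uniq L).
rewrite -cardE cardL => /leq_trans/(_ sizeT).
by rewrite ltnS expnS leqNgt ltn_Pmull ?expn_gt0 ?(ltnW m_gt1).
Qed.

Lemma trace_subfield_surj m n r (x : L) :
  [pchar L].-nat m -> (1 < m)%N -> #|L| = (m ^ (n * r))%N -> (0 < n * r)%N ->
  x ^+ m = x -> exists2 c, c ^+ (m ^ n) = c & trace m n c = x.
Proof.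
move=> pcharLm m_gt1 cardL nr_gt0 xm.
have Lfix (v : L) : v ^+ (m ^ (n * r)) = v by rewrite -cardL expf_card.
have [y tr_neq0] := trace_neq0 m_gt1 cardL nr_gt0.
have zmn : trace (m ^ n) r y ^+ (m ^ n) = trace (m ^ n) r y.
  by apply: trace_fixed; rewrite ?pchar_nat_expn // -expnM Lfix.
have sm : trace m (n * r) y ^+ m = trace m (n * r) y by apply: trace_fixed.
exists (x / trace m (n * r) y * trace (m ^ n) r y).
  by rewrite !exprMn exprVn zmn !(expr_expn_fixed n) ?sm.
by rewrite traceZ -?trace_tower ?divfK // exprMn exprVn xm sm.
Qed.

(* [P] vanishes at 0 and at the conjugates of [a] other than [a] itself; summing it
   over all conjugates recovers [P.[a] != 0] as a combination of the power traces. *)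
Lemma trace_conjugate_powers_neq0 m k (a : L) :
  a != 0 -> (0 < k)%N -> (forall j, (0 < j < k)%N -> a ^+ (m ^ j) != a) ->
  ~ (forall i, (0 < i <= k)%N -> trace m k (a ^+ i) = 0).
Proof.
case: k => // k a_neq0 _ conj_neq all0.
pose P : {poly L} := (\prod_(j < k) ('X - (a ^+ (m ^ j.+1))%:P)) * 'X.
have Pa_neq0 : P.[a] != 0.
  rewrite hornerM hornerX mulf_neq0 // horner_prod; apply/prodf_neq0 => j _.
  by rewrite hornerXsubC subr_eq0 eq_sym; apply: conj_neq => /=; rewrite ltnS ltn_ord.
have P_conj (j : 'I_k) : P.[a ^+ (m ^ j.+1)] = 0.
  rewrite hornerM horner_prod; apply/eqP; rewrite mulf_eq0; apply/orP; left.
  by apply/prodf_eq0; exists j; rewrite // hornerXsubC subrr.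
have sizeP : size P = k.+2.
  rewrite size_mulX ?monic_neq0 ?monic_prod_XsubC // size_prod_XsubC.
  by rewrite [index_enum _]unlock -enumT size_enum_ord.
have : \sum_(w < k.+1) P.[a ^+ (m ^ w)] = \sum_(i < size P) P`_i * trace m k.+1 (a ^+ i).
  under eq_bigr => w _ do rewrite horner_coef.
  rewrite exchange_big; apply: eq_bigr => i _; rewrite /trace mulr_sumr.
  by apply: eq_bigr => w _; rewrite exprAC.
rewrite big_ord_recl big1 => [|j _]; last exact: P_conj.
rewrite big1 => [|i _]; last first.
  have [->|i_gt0] := posnP i; first by rewrite coefMX eqxx mul0r.
  by rewrite all0 ?mulr0 // i_gt0 -ltnS -sizeP ltn_ord.
by rewrite expn0 expr1 addr0 => Pa_eq0; rewrite Pa_eq0 eqxx in Pa_neq0.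
Qed.

Lemma expr_expn_period_dvdn m k r (x : L) : (0 < k)%N -> x ^+ (m ^ k) = x ->
  (forall j, (0 < j)%N && (x ^+ (m ^ j) == x) -> (k <= j)%N) ->
  x ^+ (m ^ r) = x -> (k %| r)%N.
Proof.
move=> k_gt0 xmk k_min xmr; apply: contraT; rewrite /dvdn -lt0n => rk_gt0.
suff: (k <= r %% k)%N by rewrite leqNgt ltn_pmod.
apply: k_min; rewrite rk_gt0 -(expr_expn_periodic (r %% k) (r %/ k) xmk).
by rewrite addnC mulnC -divn_eq xmr eqxx.
Qed.

Section PrimeCharacteristic.

Variable p : nat.
Hypothesis pcharLp : p \in [pchar L].

Lemma trace_eq0_subfield m r (x : L) :
  (p %| r)%N -> x ^+ (m ^ (r %/ p)) = x -> trace m r x = 0.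
Proof.
by move=> p_dvd_r xm; rewrite -(divnK p_dvd_r) trace_periodic // mulrn_pchar.
Qed.

Lemma trace_expr_eq0_coprime m r (a : L) :
  (forall i, (0 < i <= r)%N -> ~~ (p %| i)%N -> trace m r (a ^+ i) = 0) ->
  forall i, (0 < i <= r)%N -> trace m r (a ^+ i) = 0.
Proof.
have p_prime := pcharf_prime pcharLp; have p_gt1 := prime_gt1 p_prime.
move=> trace_coprime; elim/ltn_ind => i IHi i_range.
have [/dvdnP[j i_eq]|] := boolP (p %| i)%N; last exact: trace_coprime.
move: i_range IHi; rewrite i_eq => ij_range IHi.
rewrite exprM trace_expr_pchar_nat ?pnatE // IHi; last by nia.
  by rewrite expr0n gtn_eqF // prime_gt0.
by nia.
Qed.

(* With k the degree of [a] over F_m, the trace to F_m from F_(m^r) is r/k times the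
   trace from F_(m^k), so the vanishing of all power traces forces p | r/k. *)
Lemma subfield_of_trace_expr_eq0 m r (a : L) :
  (0 < r)%N -> a != 0 -> a ^+ (m ^ r) = a ->
  (forall i, (0 < i <= r)%N -> ~~ (p %| i)%N -> trace m r (a ^+ i) = 0) ->
  (p %| r)%N && (a ^+ (m ^ (r %/ p)) == a).
Proof.
move=> r_gt0 a_neq0 amr /trace_expr_eq0_coprime trace_eq0.
have period_exists : exists k, (0 < k)%N && (a ^+ (m ^ k) == a).
  by exists r; rewrite r_gt0 amr eqxx.
case: (ex_minnP period_exists) => k /andP[k_gt0 /eqP amk] k_min.
have k_le_r : (k <= r)%N by apply: k_min; rewrite r_gt0 amr eqxx.
have r_eq : r = (k * (r %/ k))%N.
  by rewrite mulnC divnK // (expr_expn_period_dvdn k_gt0 amk k_min amr).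
have [p_dvd|p_ndvd] := boolP (p %| r %/ k)%N.
  rewrite r_eq dvdn_mull //=; apply/eqP.
  by rewrite -muln_divA // expnM expr_expn_fixed.
exfalso; apply: (trace_conjugate_powers_neq0 (m := m) a_neq0 k_gt0).
  move=> j /andP[j_gt0 j_lt_k]; apply/negP => /eqP amj.
  by have := k_min j; rewrite j_gt0 amj eqxx leqNgt j_lt_k => /(_ isT).
move=> i /andP[i_gt0 i_le_k]; apply/eqP.
have := trace_eq0 i; rewrite i_gt0 (leq_trans i_le_k k_le_r) => /(_ isT).
rewrite {1}r_eq trace_periodic; last by rewrite exprAC amk.
by rewrite -mulr_natr => /eqP; rewrite mulf_eq0 -(dvdn_pcharf pcharLp) (negbTE p_ndvd) orbF.
Qed.

Lemma exists_trace_expr_neq0 m r (a : L) :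
  (0 < r)%N -> a != 0 -> a ^+ (m ^ r) = a ->
  ~~ ((p %| r)%N && (a ^+ (m ^ (r %/ p)) == a)) ->
  exists i, [&& (0 < i <= r)%N, ~~ (p %| i)%N & trace m r (a ^+ i) != 0].
Proof.
move=> r_gt0 a_neq0 amr not_sub.
pose good (i : nat) := [&& (0 < i)%N, ~~ (p %| i)%N & trace m r (a ^+ i) != 0].
have [/existsP[i /and3P[i_gt0 p_ndvd tr_neq0]] | none] :=
  boolP [exists i : 'I_r.+1, good i].
  by exists i; rewrite i_gt0 p_ndvd tr_neq0 -ltnS ltn_ord.
case/negP: not_sub; apply: subfield_of_trace_expr_eq0 => // i /andP[i_gt0 i_le_r] p_ndvd.
have /negP := (existsPn none) (Ordinal (i_le_r : (i < r.+1)%N)).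
by rewrite /good /= i_gt0 p_ndvd => /negP; rewrite negbK => /eqP.
Qed.

End PrimeCharacteristic.

End Trace.

Section Polynomials.

Variables (L : finFieldType) (d : nat).
Implicit Type a : {ffun 'I_d.+1 -> L}.

Lemma horner_poly_of a x : (poly_of a).[x] = \sum_(i < d.+1) a i * x ^+ i.
Proof. by rewrite horner_poly; apply: eq_bigr => i _; rewrite inord_val. Qed.

Definition add_coef (j : 'I_d.+1) (c : L) a : {ffun 'I_d.+1 -> L} :=
  [ffun i => a i + (i == j)%:R * c].

Lemma add_coefK j c : cancel (add_coef j c) (add_coef j (- c)).
Proof. by move=> a; apply/ffunP => i; rewrite !ffunE mulrN addrK. Qed.

Lemma horner_add_coef j c a x :
  (poly_of (add_coef j c a)).[x] = (poly_of a).[x] + c * x ^+ j.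
Proof.
rewrite !horner_poly_of; under eq_bigr => i _ do rewrite ffunE mulrDl.
rewrite big_split /=; congr (_ + _).
by rewrite (bigD1 j) //= eqxx mul1r big1 ?addr0 // => i /negbTE ->; rewrite !mul0r.
Qed.

Variables (p q : nat).

Lemma mem_Fd_add_coef (j : 'I_d.+1) (c : L) a :
  [pchar L].-nat q -> c ^+ q = c -> ~~ (p %| j)%N -> j != ord_max ->
  (add_coef j c a \in Fd L p q d) = (a \in Fd L p q d).
Proof.
move=> pcharLq cq p_ndvd_j j_neq_max.
rewrite !inE !ffunE (eq_sym ord_max) (negbTE j_neq_max).
rewrite mul0r addr0; congr [&& _, _ & _]; apply: eq_forallb => i; rewrite ffunE.
  have [->|_] := eqVneq i j; last by rewrite mul0r addr0.
  by rewrite !inE mul1r exprDn_pchar // cq (inj_eq (addIr c)).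
by have [->|_] := eqVneq i j; rewrite ?(negbTE p_ndvd_j) // mul0r addr0.
Qed.

Lemma Fd_neq0 : (0 < q)%N -> ~~ (p %| d)%N -> Fd L p q d != set0.
Proof.
move=> q_gt0 p_ndvd_d; apply/set0Pn; exists [ffun i => (i == ord_max)%:R].
rewrite inE ffunE eqxx oner_eq0 andbT; apply/andP; split; apply/forallP => i.
  by rewrite inE ffunE; case: (i == ord_max); rewrite ?expr1n ?expr0n ?gtn_eqF.
rewrite ffunE; case: (eqVneq i ord_max) => [->|_] /=.
  by rewrite (negbTE p_ndvd_d).
by rewrite eqxx implybT.
Qed.

End Polynomials.

Lemma sum_eq0_of_shift (T : finType) (R : idomainType) (A : {set T}) (F : T -> R)
    (sh : T -> T) (z : R) :
  injective sh -> (forall a, (sh a \in A) = (a \in A)) ->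
  (forall a, F (sh a) = F a * z) -> z != 1 -> \sum_(a in A) F a = 0.
Proof.
move=> sh_inj shA Fsh z_neq1.
have : \sum_(a in A) F a = (\sum_(a in A) F a) * z.
  rewrite {1}(reindex_inj sh_inj) mulr_suml /=.
  by apply: eq_big => [a | a _]; rewrite ?shA ?Fsh.
move/eqP; rewrite -subr_eq0 -{1}[X in X - _]mulr1 -mulrBr mulf_eq0 subr_eq0 [1 == _]eq_sym.
by rewrite (negbTE z_neq1) orbF => /eqP.
Qed.

Section CharacterSum.

Variables (p n d r : nat) (L : finFieldType) (psi : L -> algC) (alpha : L).
Hypothesis pcharLp : p \in [pchar L].
Hypothesis cardL : #|L| = ((p ^ n) ^ r)%N.
Hypothesis psi_neq0 : forall x, x \in Fsub L p -> psi x != 0.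
Hypothesis psiD :
  forall x y, x \in Fsub L p -> y \in Fsub L p -> psi (x + y) = psi x * psi y.

Local Notation q := (p ^ n)%N.

Lemma pchar_nat_p : [pchar L].-nat p.
Proof. by rewrite pnatE ?(pcharf_prime pcharLp). Qed.

Lemma pchar_nat_q : [pchar L].-nat q.
Proof. exact: pchar_nat_expn pchar_nat_p n. Qed.

Lemma card_expn : #|L| = (p ^ (n * r))%N.
Proof. by rewrite cardL expnM. Qed.

Lemma expr_card_q (x : L) : x ^+ (q ^ r) = x.
Proof. by rewrite -cardL expf_card. Qed.

Lemma psi0 : psi 0 = 1.
Proof.
have Fp0 : (0 : L) \in Fsub L p.
  by rewrite inE expr0n gtn_eqF ?prime_gt0 ?(pcharf_prime pcharLp).
by apply: (mulfI (psi_neq0 Fp0)); rewrite mulr1 -psiD // addr0.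
Qed.

Lemma trace_in_Fp x : trace p (n * r) x \in Fsub L p.
Proof.
apply/FsubP/trace_fixed; first exact: pchar_nat_p.
by rewrite -card_expn expf_card.
Qed.

Lemma trace_poly_of_Fd a : a \in Fd L p q d ->
  trace p (n * r) (poly_of a).[alpha]
  = trace p n (\sum_(i < d.+1) a i * trace q r (alpha ^+ i)).
Proof.
rewrite inE => /and3P[/forallP a_Fq _ _].
rewrite trace_tower ?pchar_nat_p // horner_poly_of (trace_sum pchar_nat_q).
by congr (trace p n _); apply: eq_bigr => i _; rewrite traceZ //; apply/FsubP.
Qed.

Lemma sum_psi_Fd_trivial :
  (alpha == 0) || ((p %| r)%N && (alpha ^+ (q ^ (r %/ p)) == alpha)) ->
  \sum_(a in Fd L p q d) psi (trace p (n * r) (poly_of a).[alpha]) = #|Fd L p q d|%:R.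
Proof.
move=> trivial; rewrite -sumr_const; apply: eq_bigr => a a_Fd.
rewrite trace_poly_of_Fd // big1 ?(trace0 pchar_nat_p) ?psi0 // => i _.
move: a_Fd; rewrite inE => /and3P[_ /forallP a_p _].
have [i0 | i_gt0] := posnP i.
  by have := a_p i; rewrite i0 dvdn0 implyTb => /eqP ->; rewrite mul0r.
case/orP: trivial => [/eqP -> | /andP[p_dvd_r /eqP alpha_sub]].
  by rewrite expr0n gtn_eqF // (trace0 pchar_nat_q) mulr0.
by rewrite (trace_eq0_subfield pcharLp) ?mulr0 // exprAC alpha_sub.
Qed.

Lemma sum_psi_Fd_eq0 x0 : x0 \in Fsub L p -> psi x0 != 1 -> (r < d)%N ->
  ~~ ((alpha == 0) || ((p %| r)%N && (alpha ^+ (q ^ (r %/ p)) == alpha))) ->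
  \sum_(a in Fd L p q d) psi (trace p (n * r) (poly_of a).[alpha]) = 0.
Proof.
move=> x0_Fp psi_x0 r_lt_d /norP[alpha_neq0 not_sub].
have p_gt1 := prime_gt1 (pcharf_prime pcharLp).
have nr_gt0 : (0 < n * r)%N.
  by rewrite lt0n; apply: contraTneq (finNzRing_gt1 L) => nr0; rewrite card_expn nr0.
have r_gt0 : (0 < r)%N by move: nr_gt0; rewrite muln_gt0 => /andP[].
have [i0 /and3P[/andP[i0_gt0 i0_le_r] p_ndvd t_neq0]] :=
  exists_trace_expr_neq0 pcharLp r_gt0 alpha_neq0 (expr_card_q alpha) not_sub.
have tq : trace q r (alpha ^+ i0) ^+ q = trace q r (alpha ^+ i0).
  exact: trace_fixed pchar_nat_q _ _ (expr_card_q _).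
have [c cq tr_c] :=
  trace_subfield_surj pchar_nat_p p_gt1 card_expn nr_gt0 (FsubP _ _ x0_Fp).
pose j0 : 'I_d.+1 := inord i0.
have j0_val : j0 = i0 :> nat by rewrite inordK // ltnS ltnW // (leq_ltn_trans i0_le_r).
set c' := c / trace q r (alpha ^+ i0).
have c'q : c' ^+ q = c' by rewrite exprMn exprVn cq tq.
apply: (@sum_eq0_of_shift _ _ _ _ (add_coef j0 c') (psi x0)) => // [||a].
- exact: can_inj (add_coefK j0 c').
- move=> a; rewrite mem_Fd_add_coef ?pchar_nat_q ?j0_val //.
  by rewrite -(inj_eq val_inj) /= j0_val neq_ltn (leq_ltn_trans i0_le_r r_lt_d).
have trace_shift : trace p (n * r) (c' * alpha ^+ j0) = x0.
  by rewrite (trace_tower pchar_nat_p) traceZ // j0_val divfK.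
by rewrite horner_add_coef (traceD pchar_nat_p) psiD ?trace_in_Fp // trace_shift.
Qed.

End CharacterSum.

Theorem lemma2 (p n d r : nat) (L : finFieldType) (psi : L -> algC) (alpha : L) :
  prime p -> p \in [pchar L] -> #|L| = ((p ^ n) ^ r)%N ->
  coprime d p ->
  (forall x, x \in Fsub L p -> psi x != 0) ->
  (forall x y, x \in Fsub L p -> y \in Fsub L p -> psi (x + y) = psi x * psi y) ->
  (exists2 x, x \in Fsub L p & psi x != 1) ->
  (r < d)%N ->
  (\sum_(a in Fd L p (p ^ n) d) psi (trace p (n * r) (poly_of a).[alpha]))
    / #|Fd L p (p ^ n) d|%:R
  = if (alpha == 0) || ((p %| r)%N && (alpha \in Fsub L ((p ^ n) ^ (r %/ p))))
    then 1 else 0.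
Proof.
move=> p_prime pcharLp cardL coprime_dp psi_neq0 psiD [x0 x0_Fp psi_x0] r_lt_d.
rewrite [alpha \in _]inE; case: ifP => [trivial | /negbT nontrivial].
  have Fd_gt0 : (0 < #|Fd L p (p ^ n) d|)%N.
    by rewrite card_gt0 Fd_neq0 ?expn_gt0 ?prime_gt0 // -prime_coprime // coprime_sym.
  by rewrite sum_psi_Fd_trivial // divff // pnatr_eq0 -lt0n.
by rewrite (sum_psi_Fd_eq0 pcharLp cardL psiD x0_Fp psi_x0 r_lt_d nontrivial) mul0r.
Qed.
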